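(* Let $(\mathfrak{A},\varphi,\tau)$ be a $*$-dynamical system and let $\mathfrak{S}$ and $\mathfrak{T}$ be $\varphi$-total sets in $\mathfrak{A}$. Then: (i) If $(\mathfrak{A},\varphi,\tau)$ is ergodic, then $\frac1n\sum_{k=0}^{n-1}\varphi\left(A\tau^k(B)\right)\to\varphi(A)\varphi(B)$ as $n\to\infty$ for all $A,B\in\mathfrak{A}$. (ii) If $\frac1n\sum_{k=0}^{n-1}\varphi\left(A\tau^k(B)\right)\to\varphi(A)\varphi(B)$ as $n\to\infty$ for all $A\in\mathfrak{S}^*$ and $B\in\mathfrak{T}$, then $(\mathfrak{A},\varphi,\tau)$ is ergodic.
   Context: All algebras are over $\mathbb{C}$. A state on a unital $*$-algebra $\mathfrak{A}$ is a linear functional $\varphi$ with $\varphi(A^*A)\ge0$ for all $A$ and $\varphi(1)=1$. A $*$-dynamical system is a triple $(\mathfrak{A},\varphi,\tau)$ with $\mathfrak{A}$ a unital $*$-algebra, $\varphi$ a state, and $\tau:\mathfrak{A}\to\mathfrak{A}$ linear with $\tau(1)=1$ and $\varphi(\tau(A)^*\tau(A))\le\varphi(A^*A)$ for all $A$. Let $\|A\|_\varphi=\sqrt{\varphi(A^*A)}$ and identify $\alpha\in\mathbb{C}$ with $\alpha1$. The system is ergodic if for every sequence $(A_n)$ with $\|\tau(A_n)-A_n\|_\varphi\to0$ which is Cauchy for $\|\cdot\|_\varphi$ (for every $\varepsilon>0$ there is $N$ with $\|A_m-A_n\|_\varphi\le\varepsilon$ for $m,n>N$), there is $\alpha\in\mathbb{C}$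 with $\|A_n-\alpha\|_\varphi\to0$. A subset of $\mathfrak{A}$ is $\varphi$-total if its linear span is dense in the seminormed space $(\mathfrak{A},\|\cdot\|_\varphi)$. For $\mathfrak{S}\subseteq\mathfrak{A}$, $\mathfrak{S}^*=\{A^*:A\in\mathfrak{S}\}$. *)

(* The complex field is modelled as  R[i] = complex R  for an
   arbitrary R : realType (every realType is a complete archimedean ordered
   field, hence isomorphic to the reals, so R[i] is isomorphic to C). *)
From HB Require Import structures.
From mathcomp Require Import all_boot all_order all_algebra.
From mathcomp Require Import reals.
From mathcomp.real_closed Require Import complex.
Set Implicit Arguments. Unset Strict Implicit. Unset Printing Implicit Defensive.
Import Order.TTheory GRing.Theory Num.Theory.
Local Open Scope ring_scope.
Local Open Scope complex_scope.

Section Defs.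
Variable R : realType.
Local Notation C := (R[i]).

Definition is_star (A : algType C) (star : A -> A) : Prop :=
  [/\ forall x y : A, star (x + y) = star x + star y,
      forall (c : C) (x : A), star (c *: x) = (c^*)%C *: star x,
      forall x y : A, star (x * y) = star y * star x &
      forall x : A, star (star x) = x].

Definition is_lin_functional (A : algType C) (phi : A -> C) : Prop :=
  forall (c : C) (x y : A), phi (c *: x + y) = c * phi x + phi y.

Definition is_lin_map (A : algType C) (tau : A -> A) : Prop :=
  forall (c : C) (x y : A), tau (c *: x + y) = c *: tau x + tau y.

Definition is_state (A : algType C) (star : A -> A) (phi : A -> C) : Prop :=
  [/\ is_lin_functional phi, forall x : A, 0 <= phi (star x * x) & phi 1 = 1].

Definition is_star_dyn_system (A : algType C) (star : A -> A) (phi : A -> C)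
    (tau : A -> A) : Prop :=
  [/\ is_star star, is_state star phi, is_lin_map tau, tau 1 = 1 &
      forall x : A, phi (star (tau x) * tau x) <= phi (star x * x)].

Definition phinorm (A : algType C) (star : A -> A) (phi : A -> C) (x : A) : C :=
  sqrtC (phi (star x * x)).

Definition cvgC (u : nat -> C) (l : C) : Prop :=
  forall e : R, 0 < e -> exists N : nat, forall n : nat, (N <= n)%N ->
    `|u n - l| < e%:C.

Definition phi_cauchy (A : algType C) (star : A -> A) (phi : A -> C)
    (a : nat -> A) : Prop :=
  forall e : R, 0 < e -> exists N : nat, forall m n : nat, (N < m)%N -> (N < n)%N ->
    phinorm star phi (a m - a n) <= e%:C.

Definition ergodic (A : algType C) (star : A -> A) (phi : A -> C)
    (tau : A -> A) : Prop :=
  forall a : nat -> A,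
    cvgC (fun n => phinorm star phi (tau (a n) - a n)) 0 ->
    phi_cauchy star phi a ->
    exists alpha : C, cvgC (fun n => phinorm star phi (a n - alpha%:A)) 0.

Definition phi_total (A : algType C) (star : A -> A) (phi : A -> C)
    (S : A -> Prop) : Prop :=
  forall (x : A) (e : R), 0 < e ->
    exists (n : nat) (c : 'I_n -> C) (s : 'I_n -> A),
      (forall i, S (s i)) /\
      phinorm star phi (x - \sum_(i < n) c i *: s i) < e%:C.

Definition cesaro_corr (A : algType C) (phi : A -> C) (tau : A -> A)
    (x y : A) (n : nat) : C :=
  (n%:R)^-1 * \sum_(k < n) phi (x * iter k tau y).

End Defs.

(* The GNS semi-inner product <x, y> = phi (x^* y) turns A into a pre-Hilbert
   space in which tau is a contraction fixing 1; in particular phi (tau x) = phi x.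
   (i) Ergodicity replaces completeness: a norm-minimising sequence in the
   (midpoint-)convex hull of the orbit of y is Cauchy and almost invariant, hence
   converges to a constant, necessarily phi y. Cesaro means of hull elements differ
   from those of y by O(1/n), so the Cesaro means of y tend to phi(y) 1 (a mean
   ergodic theorem), and Cauchy-Schwarz gives the correlation limit.
   (ii) By sesquilinearity and density the hypothesis extends to
   <g, M_n f> -> <g, 1> phi f for all g, f. If (a_n) is Cauchy and almost
   invariant, phi (a_n) -> alpha, and b = a_m - alpha satisfies
   ||b||^2 = <b, M_k b> + <b, b - M_k b>, where the first term is close to
   |phi b|^2 and the second is small because b is almost invariant. *)

From HB Require Import structures.
From mathcomp Require Import all_boot all_order all_algebra.
From mathcomp Require Import classical_sets boolp reals.
From mathcomp.real_closed Require Import complex.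
From mathcomp Require Import ring lra.
Import Order.TTheory GRing.Theory Num.Theory ComplexField.Normc.
Set Implicit Arguments. Unset Strict Implicit.
Local Open Scope ring_scope.
Local Open Scope complex_scope.
Local Notation Re := complex.Re.
Local Notation Im := complex.Im.

Section ComplexNorm.
Variable R : rcfType.
Implicit Types z : R[i].

Lemma normcE z : `|z| = (normc z)%:C.
Proof. by case: z => a b; rewrite normc_def. Qed.

Lemma normc_ge0 z : 0 <= normc z.
Proof. by rewrite -ler0c -normcE. Qed.

Lemma normc_sqr z : normc z ^+ 2 = Re z ^+ 2 + Im z ^+ 2.
Proof. by case: z => a b; rewrite /= sqr_sqrtr // addr_ge0 ?sqr_ge0. Qed.

Lemma normc_real (r : R) : normc r%:C = `|r|.
Proof. by rewrite /= expr0n addr0 sqrtr_sqr. Qed.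

Lemma normc_conj z : normc z^* = normc z.
Proof. by apply: complexI; rewrite -!normcE normcJ. Qed.

Lemma Re_le_normc z : `|Re z| <= normc z.
Proof. by rewrite -lecR -normcE normc_ge_Re. Qed.

Lemma Im_le_normc z : `|Im z| <= normc z.
Proof.
rewrite -sqrtr_sqr -[normc z]ger0_norm ?normc_ge0 // -sqrtr_sqr.
by rewrite ler_wsqrtr // normc_sqr lerDr sqr_ge0.
Qed.

Lemma normc_le_Re_Im z : normc z <= `|Re z| + `|Im z|.
Proof.
rewrite -ler_sqr ?nnegrE ?normc_ge0 ?addr_ge0 // normc_sqr sqrrD.
rewrite -[Re z ^+ 2]real_normK ?num_real // -[Im z ^+ 2]real_normK ?num_real //.
by rewrite lerD2r lerDl mulrn_wge0 // mulr_ge0.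
Qed.

Lemma Re_realM (r : R) z : Re (r%:C * z) = r * Re z.
Proof. by case: z => a b /=; rewrite mul0r subr0. Qed.

Lemma Re_le_normc_subr z (r : R) : Re z <= normc (z - r%:C) + r.
Proof.
by have := le_trans (ler_norm _) (Re_le_normc (z - r%:C)); rewrite raddfB /=; lra.
Qed.

Lemma normc_invn n : normc (n%:R^-1 : R[i]) = n%:R^-1.
Proof.
by rewrite -(rmorph_nat (real_complex R)) -fmorphV normc_real ger0_norm ?invr_ge0.
Qed.

Lemma normc_conjM z : z^* * z = (normc z ^+ 2)%:C.
Proof. by rewrite rmorphXn /= -normcE normCKC. Qed.
End ComplexNorm.

Section ComplexSequences.
Variable R : realType.
Implicit Types (u v : nat -> R[i]) (l : R[i]).

Lemma cvgCP u l : cvgC u l <->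
  forall e : R, 0 < e -> exists N, forall n, (N <= n)%N -> normc (u n - l) < e.
Proof. by split=> h e /h [N hN]; exists N => n /hN; rewrite normcE ltcR. Qed.

Lemma eq_cvgC u v l : u =1 v -> cvgC u l -> cvgC v l.
Proof. by move=> uv h e /h [N hN]; exists N => n /hN; rewrite uv. Qed.

Lemma cvgC_cst l : cvgC (fun=> l) l.
Proof. by move=> e e0; exists 0%N => n _; rewrite subrr normr0 ltcR. Qed.

Lemma cvgCD u v l l' : cvgC u l -> cvgC v l' -> cvgC (fun n => u n + v n) (l + l').
Proof.
move=> /cvgCP hu /cvgCP hv; apply/cvgCP => e e0; have e2 : 0 < e / 2 by rewrite divr_gt0.
have [N1 h1] := hu _ e2; have [N2 h2] := hv _ e2.
exists (maxn N1 N2) => n; rewrite geq_max => /andP[/h1 n1 /h2 n2].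
rewrite opprD addrACA; apply: le_lt_trans (le_normcD _ _) _; lra.
Qed.

Lemma cvgCMl c u l : cvgC u l -> cvgC (fun n => c * u n) (c * l).
Proof.
move=> /cvgCP hu; apply/cvgCP => e e0.
have c1 : 0 < normc c + 1 by rewrite ltr_wpDl ?normc_ge0.
have [N hN] := hu _ (divr_gt0 e0 c1); exists N => n /hN un.
rewrite -mulrBr normcM; apply: le_lt_trans (_ : normc c * (e / (normc c + 1)) < e).
  by rewrite ler_wpM2l ?normc_ge0 ?ltW.
by rewrite mulrA ltr_pdivrMr //; have := normc_ge0 c; nra.
Qed.

Lemma cvgC_sum m (u : 'I_m -> nat -> R[i]) (l : 'I_m -> R[i]) :
  (forall i, cvgC (u i) (l i)) ->
  cvgC (fun n => \sum_(i < m) u i n) (\sum_(i < m) l i).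
Proof.
elim: m u l => [|m IH] u l ul.
  by apply: (@eq_cvgC (fun=> 0)) => [n|]; rewrite !big_ord0 //; apply: cvgC_cst.
rewrite big_ord_recr.
apply: (@eq_cvgC (fun n => \sum_(i < m) u (widen_ord (leqnSn m) i) n + u ord_max n)).
  by move=> n; rewrite big_ord_recr.
by apply: cvgCD; [apply: IH => i|]; apply: ul.
Qed.

Lemma cvgC_approx u l :
  (forall d : R, 0 < d -> exists v l',
     [/\ cvgC v l', forall n, normc (u n - v n) <= d & normc (l - l') <= d]) ->
  cvgC u l.
Proof.
move=> h; apply/cvgCP => e e0; have e3 : 0 < e / 3 by rewrite divr_gt0.
have [v [l' [/cvgCP vl uv ll]]] := h _ e3; have [N hN] := vl _ e3.
exists N => n /hN vn; have -> : u n - l = (u n - v n) + (v n - l') + (l' - l).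
  by rewrite !addrA !subrK.
rewrite -normcN opprB in ll.
apply: le_lt_trans (le_normcD _ _) _.
apply: le_lt_trans (lerD (le_normcD _ _) (lexx _)) _; have := uv n; lra.
Qed.

Lemma invSn_lt_eventually (e : R) : 0 < e ->
  exists N, forall n, (N <= n)%N -> (n.+1%:R : R)^-1 < e.
Proof.
move=> e0; exists (Num.Def.archi_bound e^-1) => n Nn.
rewrite invf_plt ?posrE ?ltr0Sn //.
have /archi_boundP/lt_le_trans -> // : 0 <= e^-1 by rewrite invr_ge0 ltW.
by rewrite ler_nat (leq_trans Nn).
Qed.

Lemma cauchy_cvgR (r : nat -> R) :
  (forall e : R, 0 < e ->
     exists N, forall m n, (N <= m)%N -> (N <= n)%N -> `|r m - r n| <= e) ->
  exists l : R, forall e : R, 0 < e -> exists N, forall n, (N <= n)%N -> `|r n - l| <= e.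
Proof.
move=> h; pose E : set R := fun x => exists N, forall n, (N <= n)%N -> x <= r n.
have near_rN e : 0 < e -> exists N, forall n, (N <= n)%N -> r N - e <= r n <= r N + e.
  by move=> /h [N hN]; exists N => n Nn; rewrite -ler_distl distrC hN.
have [N1 hN1] := near_rN _ ltr01.
have E_ub x : E x -> x <= r N1 + 1.
  move=> [N hN]; have := hN1 (maxn N N1) (leq_maxr _ _).
  have := hN (maxn N N1) (leq_maxl _ _); lra.
exists (sup E) => e e0; have [N hN] := near_rN _ (divr_gt0 e0 (ltr0Sn _ 1)).
have lb : r N - e / 2 <= sup E.
  by apply: ub_le_sup; [exists (r N1 + 1) => x /E_ub|exists N => k /hN /andP[]].
have ub : sup E <= r N + e / 2.
  apply: ge_sup; first by exists (r N - e / 2), N => k /hN /andP[].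
  move=> x [M hM]; have := hM (maxn M N) (leq_maxl _ _).
  have /andP[_] := hN (maxn M N) (leq_maxr _ _); lra.
exists N => n /hN /andP[? ?]; rewrite ler_distl; apply/andP; split; lra.
Qed.

Lemma cauchy_cvgC (u : nat -> R[i]) :
  (forall e : R, 0 < e ->
     exists N, forall m n, (N <= m)%N -> (N <= n)%N -> normc (u m - u n) <= e) ->
  exists l, cvgC u l.
Proof.
move=> h.
have [a ha] : exists a : R, forall e : R, 0 < e ->
    exists N, forall n, (N <= n)%N -> `|Re (u n) - a| <= e.
  apply: cauchy_cvgR => e /h [N hN]; exists N => m n Nm Nn.
  by rewrite -raddfB; apply: le_trans (Re_le_normc _) (hN _ _ Nm Nn).
have [b hb] : exists b : R, forall e : R, 0 < e ->
    exists N, forall n, (N <= n)%N -> `|Im (u n) - b| <= e.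
  apply: cauchy_cvgR => e /h [N hN]; exists N => m n Nm Nn.
  by rewrite -raddfB; apply: le_trans (Im_le_normc _) (hN _ _ Nm Nn).
exists (a +i* b); apply/cvgCP => e e0; have e3 : 0 < e / 3 by rewrite divr_gt0.
have [N1 h1] := ha _ e3; have [N2 h2] := hb _ e3.
exists (maxn N1 N2) => n; rewrite geq_max => /andP[/h1 n1 /h2 n2].
apply: le_lt_trans (normc_le_Re_Im _) _; rewrite !raddfB /=; lra.
Qed.
End ComplexSequences.

Lemma quadratic_ge0_discr (R : realFieldType) (a b c : R) : 0 <= a -> 0 <= c ->
  (forall t, 0 <= a + 2 * b * t + c * t ^+ 2) -> b ^+ 2 <= a * c.
Proof.
move=> a0 c0 h; have [c_eq0|c_neq0] := eqVneq c 0.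
  subst c; have [->|b_neq0] := eqVneq b 0; first by rewrite expr0n mulr0.
  have := h (- (a + 1) / (2 * b)).
  by rewrite mulrC divfK ?mulf_neq0 ?pnatr_eq0 // mul0r addr0; lra.
have [u bE] : exists u, b = u * c by exists (b / c); rewrite divfK.
subst b.
have -> : a * c = c * (a + 2 * (u * c) * - u + c * (- u) ^+ 2) + (u * c) ^+ 2 by ring.
by rewrite lerDr mulr_ge0.
Qed.

Section StarSeminorm.
Variables (R : realType) (A : algType R[i]) (star : A -> A) (phi : A -> R[i]).
Hypotheses (star_inv : is_star star) (phi_state : is_state star phi).

Lemma starD x y : star (x + y) = star x + star y. Proof. by case: star_inv. Qed.
Lemma starZ c x : star (c *: x) = c^* *: star x. Proof. by case: star_inv. Qed.
Lemma starM x y : star (x * y) = star y * star x. Proof. by case: star_inv. Qed.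
Lemma starK : involutive star. Proof. by case: star_inv. Qed.

Lemma star0 : star 0 = 0.
Proof. by apply: (@addrI _ (star 0)); rewrite -starD !addr0. Qed.

HB.instance Definition _ := GRing.isNmodMorphism.Build A A star (star0, starD).

Lemma star1 : star 1 = 1.
Proof. by have := starM (star 1) 1; rewrite mulr1 starK mulr1 => <-. Qed.

HB.instance Definition _ :=
  GRing.isLinear.Build R[i] A R[i] *%R phi (let: And3 lin _ _ := phi_state in lin).

Lemma phi1 : phi 1 = 1. Proof. by case: phi_state. Qed.

Definition inner x y := phi (star x * y).

Lemma inner_is_linear x : linear_for *%R (inner x).
Proof. by move=> c y z; rewrite /inner mulrDr -scalerAr linearP. Qed.

HB.instance Definition _ x :=
  GRing.isLinear.Build R[i] A R[i] *%R (inner x) (inner_is_linear x).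

Lemma innerDl x y z : inner (x + y) z = inner x z + inner y z.
Proof. by rewrite /inner raddfD mulrDl linearD. Qed.

Lemma innerZl c x y : inner (c *: x) y = c^* * inner x y.
Proof. by rewrite /inner starZ -scalerAl linearZ. Qed.

Lemma innerNl x y : inner (- x) y = - inner x y.
Proof. by rewrite /inner raddfN mulNr linearN. Qed.

Lemma innerBl x y z : inner (x - y) z = inner x z - inner y z.
Proof. by rewrite innerDl innerNl. Qed.

Lemma inner_self_ge0 x : 0 <= inner x x.
Proof. by case: phi_state => _ pos _; apply: pos. Qed.

Lemma Im_inner_self x : Im (inner x x) = 0.
Proof. by have := inner_self_ge0 x; rewrite lecE => /andP[/eqP ->]. Qed.

(* Positivity makes every <z, z> real; take z = x + y and z = x + i y. *)
Lemma inner_conj x y : inner y x = (inner x y)^*.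
Proof.
have := Im_inner_self (x + y); have := Im_inner_self (x + 'i *: y).
rewrite !innerDl !linearD /= !innerZl !linearZ /= !Im_inner_self.
move: (inner x y) (inner y x) (inner y y) (Im_inner_self y) => [a b] [c d] [e f] /= -> h1 h2.
apply/eqP; rewrite eq_complex /=; apply/andP; split; apply/eqP; lra.
Qed.

Definition snorm x := Num.sqrt (Re (inner x x)).

Lemma snorm_ge0 x : 0 <= snorm x. Proof. exact: sqrtr_ge0. Qed.

Lemma inner_self x : inner x x = (snorm x ^+ 2)%:C.
Proof.
have := inner_self_ge0 x; rewrite lecE => /andP[/eqP Im0 Re0].
by rewrite sqr_sqrtr //; apply/eqP; rewrite eq_complex /= Im0 !eqxx.
Qed.

Lemma phinormE x : phinorm star phi x = (snorm x)%:C.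
Proof.
by rewrite /phinorm -/(inner x x) inner_self rmorphXn sqrCK // ler0c snorm_ge0.
Qed.

Lemma snorm_sqrD x y :
  snorm (x + y) ^+ 2 = snorm x ^+ 2 + snorm y ^+ 2 + 2 * Re (inner x y).
Proof.
apply: complexI; rewrite -inner_self innerDl !linearD /= (inner_conj x y).
rewrite !inner_self !rmorphD rmorphM /=.
case: (inner x y) => p q; simpc; apply/eqP; rewrite eq_complex /=.
by apply/andP; split; apply/eqP; ring.
Qed.

Lemma snormZ c x : snorm (c *: x) = normc c * snorm x.
Proof.
rewrite /snorm linearZ /= innerZl mulrA (mulrC c) normc_conjM inner_self -rmorphM /=.
by rewrite sqrtrM ?sqr_ge0 // !sqrtr_sqr !ger0_norm ?normc_ge0 ?snorm_ge0.
Qed.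

(* With z = <x, y>, ||x + t z^* y||^2 >= 0 is a real quadratic in t whose
   discriminant gives |z|^4 <= |z|^2 ||x||^2 ||y||^2. *)
Lemma normc_inner_le x y : normc (inner x y) <= snorm x * snorm y.
Proof.
set z := inner x y.
have [z0|z_neq0] := eqVneq (normc z) 0; first by rewrite z0 mulr_ge0 ?snorm_ge0.
suff : (normc z ^+ 2) ^+ 2 <= snorm x ^+ 2 * (normc z ^+ 2 * snorm y ^+ 2).
  move=> h; have z2 : 0 < normc z ^+ 2 by apply: exprn_gt0; rewrite lt0r z_neq0 normc_ge0.
  have sxy : 0 <= snorm x * snorm y by rewrite mulr_ge0 ?snorm_ge0.
  have nz := normc_ge0 z.
  rewrite -ler_sqr ?nnegrE //.
  by rewrite exprMn -(ler_pM2l z2) -expr2 mulrCA.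
apply: quadratic_ge0_discr => [||t]; first exact: sqr_ge0.
  by rewrite mulr_ge0 ?sqr_ge0.
have := sqr_ge0 (snorm (x + (t%:C * z^*) *: y)).
rewrite snorm_sqrD snormZ linearZ /= -/z -[_ * _ * z]mulrA normc_conjM -rmorphM /=.
rewrite normcM normc_real normc_conj !exprMn real_normK ?num_real //; lra.
Qed.

Lemma Re_inner_le x y : Re (inner x y) <= snorm x * snorm y.
Proof. exact: le_trans (ler_norm _) (le_trans (Re_le_normc _) (normc_inner_le _ _)). Qed.

Lemma snormN x : snorm (- x) = snorm x.
Proof. by rewrite -scaleN1r snormZ normcN normc1 mul1r. Qed.

Lemma snorm0 : snorm 0 = 0.
Proof. by rewrite -(scale0r 0) snormZ normc0 mul0r. Qed.

Lemma snormB x y : snorm (x - y) = snorm (y - x).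
Proof. by rewrite -snormN opprB. Qed.

Lemma snorm_sqrB x y :
  snorm (x - y) ^+ 2 = snorm x ^+ 2 + snorm y ^+ 2 - 2 * Re (inner x y).
Proof. by rewrite snorm_sqrD snormN linearN raddfN /= mulrN. Qed.

Lemma snormD x y : snorm (x + y) <= snorm x + snorm y.
Proof.
rewrite -ler_sqr ?nnegrE ?addr_ge0 ?snorm_ge0 // snorm_sqrD sqrrD.
by have := Re_inner_le x y; lra.
Qed.

Lemma snormDB x y : snorm (x - y) <= snorm x + snorm y.
Proof. by rewrite -(snormN y) snormD. Qed.

Lemma snorm_sum n (F : 'I_n -> A) : snorm (\sum_(i < n) F i) <= \sum_(i < n) snorm (F i).
Proof.
elim: n F => [|n IH] F; first by rewrite !big_ord0 snorm0.
by rewrite !big_ord_recr /=; apply: le_trans (snormD _ _) _; rewrite lerD2r IH.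
Qed.

Lemma phi_inner x : phi x = inner 1 x.
Proof. by rewrite /inner star1 mul1r. Qed.

Lemma snorm1 : snorm 1 = 1.
Proof. by rewrite /snorm -phi_inner phi1 sqrtr1. Qed.

Lemma normc_phi_le x : normc (phi x) <= snorm x.
Proof.
by rewrite phi_inner; apply: le_trans (normc_inner_le _ _) _; rewrite snorm1 mul1r.
Qed.

Lemma phi_alg c : phi c%:A = c.
Proof. by rewrite linearZ /= phi1 mulr1. Qed.

Lemma inner1_phi x : inner x 1 * phi x = (normc (phi x) ^+ 2)%:C.
Proof. by rewrite -normc_conjM phi_inner (inner_conj 1 x). Qed.

Lemma snorm_alg c : snorm c%:A = normc c.
Proof. by rewrite snormZ snorm1 mulr1. Qed.

Lemma normc_inner_sub x x' y y' :
  normc (inner x y - inner x' y') <= snorm (x - x') * snorm y + snorm x' * snorm (y - y').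
Proof.
have -> : inner x y - inner x' y' = inner (x - x') y + inner x' (y - y').
  by rewrite innerBl linearB /= addrA subrK.
by apply: le_trans (le_normcD _ _) _; rewrite lerD ?normc_inner_le.
Qed.

Lemma snorm_sqrB_mid x y (m : R) : m <= snorm (2^-1 *: (x + y)) ^+ 2 ->
  snorm (x - y) ^+ 2 <= 2 * snorm x ^+ 2 + 2 * snorm y ^+ 2 - 4 * m.
Proof.
have -> : snorm (2^-1 *: (x + y)) ^+ 2 = snorm (x + y) ^+ 2 / 4.
  by rewrite snormZ normc_invn exprMn exprVn -natrX mulrC.
rewrite ler_pdivlMr ?ltr0n // snorm_sqrB; have := snorm_sqrD x y; lra.
Qed.

Lemma inner_suml n (F : 'I_n -> A) y :
  inner (\sum_(i < n) F i) y = \sum_(i < n) inner (F i) y.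
Proof. by rewrite /inner raddf_sum mulr_suml linear_sum. Qed.

Lemma snorm_lt_sqr x (e : R) : 0 < e -> snorm x ^+ 2 < e ^+ 2 -> snorm x < e.
Proof. by move=> e0; rewrite ltr_sqr ?nnegrE ?snorm_ge0 ?ltW. Qed.

Lemma cvgC_phinorm (a : nat -> A) : cvgC (fun n => phinorm star phi (a n)) 0 <->
  forall e : R, 0 < e -> exists N, forall n, (N <= n)%N -> snorm (a n) < e.
Proof.
rewrite cvgCP; split=> h e /h [N hN]; exists N => n /hN;
by rewrite phinormE subr0 normc_real ger0_norm ?snorm_ge0.
Qed.

Lemma phi_cauchyP (a : nat -> A) : phi_cauchy star phi a <->
  forall e : R, 0 < e -> exists N, forall m n, (N < m)%N -> (N < n)%N -> snorm (a m - a n) <= e.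
Proof.
split=> h e /h [N hN]; exists N => m n Nm Nn;
by have := hN m n Nm Nn; rewrite phinormE lecR.
Qed.

Section Dynamics.
Variable tau : A -> A.
Hypotheses (tau_lin : is_lin_map tau) (tau1 : tau 1 = 1)
  (tau_contr : forall x, phi (star (tau x) * tau x) <= phi (star x * x)).

HB.instance Definition _ := GRing.isLinear.Build R[i] A A *:%R tau tau_lin.

Lemma iter_tau_is_linear k : linear (iter k tau).
Proof. by elim: k => [//|k IH] c x y /=; rewrite IH linearP. Qed.

HB.instance Definition _ k :=
  GRing.isLinear.Build R[i] A A *:%R (iter k tau) (iter_tau_is_linear k).

Lemma iter_tau1 k : iter k tau 1 = 1.
Proof. exact: iter_fix. Qed.

Lemma snorm_tau_sqr x : snorm (tau x) ^+ 2 <= snorm x ^+ 2.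
Proof. by have := tau_contr x; rewrite -!/(inner _ _) !inner_self lecR. Qed.

Lemma snorm_tau x : snorm (tau x) <= snorm x.
Proof. by rewrite -ler_sqr ?nnegrE ?snorm_ge0 ?snorm_tau_sqr. Qed.

Lemma snorm_iter k x : snorm (iter k tau x) <= snorm x.
Proof. by elim: k => //= k IH; apply: le_trans (snorm_tau _) IH. Qed.

(* ||tau (1 + t x)||^2 <= ||1 + t x||^2 for every real t forces the terms
   linear in t to agree. *)
Lemma Re_phi_tau x : Re (phi (tau x)) = Re (phi x).
Proof.
set d := Re (phi x) - Re (phi (tau x)).
suff : d ^+ 2 <= 0 * snorm x ^+ 2.
  by rewrite mul0r => d2; apply/eqP; rewrite eq_sym -subr_eq0 -sqrf_eq0 eq_le d2 sqr_ge0.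
apply: quadratic_ge0_discr => [//||t]; first exact: sqr_ge0.
have := snorm_tau_sqr (1 + t%:C *: x).
rewrite linearD linearZ /= tau1 !snorm_sqrD !snormZ normc_real !linearZ /=.
rewrite -!phi_inner !Re_realM.
have := snorm_tau_sqr x.
have := mulr_ge0 (sqr_ge0 t) (sqr_ge0 (snorm (tau x))).
rewrite snorm1 !exprMn real_normK ?num_real // /d; nra.
Qed.

Lemma phi_tau x : phi (tau x) = phi x.
Proof.
have Im_Re (z : R[i]) : Im z = - Re (z * 'i) by rewrite ReiNIm opprK.
apply/eqP; rewrite eq_complex !Im_Re ![_ * 'i]mulrC -!linearZ /=.
by rewrite !Re_phi_tau !eqxx.
Qed.

Definition cesaro n y := n%:R^-1 *: \sum_(k < n) iter k tau y.

Lemma cesaro_is_linear n : linear (cesaro n).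
Proof.
move=> c x y; rewrite /cesaro; under eq_bigr do rewrite linearP.
by rewrite big_split /= -scaler_sumr scalerDr !scalerA mulrC.
Qed.

HB.instance Definition _ n :=
  GRing.isLinear.Build R[i] A A *:%R (cesaro n) (cesaro_is_linear n).

Lemma cesaro_corrE x y n : cesaro_corr phi tau x y n = phi (x * cesaro n y).
Proof.
by rewrite /cesaro_corr /cesaro -scalerAr linearZ /= [x * _]mulr_sumr linear_sum.
Qed.

Lemma snorm_cesaro n y : snorm (cesaro n y) <= snorm y.
Proof.
case: n => [|n]; first by rewrite /cesaro big_ord0 scaler0 snorm0 snorm_ge0.
rewrite snormZ normc_invn ler_pdivrMl ?ltr0Sn //.
have -> : n.+1%:R * snorm y = \sum_(k < n.+1) snorm y.
  by rewrite sumr_const card_ord mulr_natl.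
by apply: le_trans (snorm_sum _) (ler_sum _ _) => k _; apply: snorm_iter.
Qed.

Lemma cesaro_alg n c : (0 < n)%N -> cesaro n c%:A = c%:A.
Proof.
move=> n0; rewrite /cesaro; under eq_bigr do rewrite linearZ /= iter_tau1.
rewrite sumr_const card_ord scalerMnl scalerA -[c *+ n]mulr_natl mulrA.
by rewrite mulVf ?mul1r // pnatr_eq0 -lt0n.
Qed.

Lemma cesaro_tau n y : cesaro n (tau y) = tau (cesaro n y).
Proof.
rewrite /cesaro linearZ /= [tau (\sum_(k < n) _)]linear_sum; congr (_ *: _).
by apply: eq_bigr => k _; rewrite -iterSr.
Qed.

Lemma cesaro_tau_sub n y : n%:R * snorm (cesaro n (tau y) - cesaro n y) <= 2 * snorm y.
Proof.
case: n => [|n]; first by rewrite mul0r mulr_ge0 ?snorm_ge0.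
have -> : cesaro n.+1 (tau y) - cesaro n.+1 y = n.+1%:R^-1 *: (iter n.+1 tau y - y).
  rewrite /cesaro -scalerBr -sumrB; congr (_ *: _).
  under eq_bigr do rewrite -iterSr.
  by rewrite -(big_mkord xpredT (fun k => iter k.+1 tau y - iter k tau y)) telescope_sumr.
rewrite snormZ normc_invn mulrA divff ?pnatr_eq0 // mul1r.
by apply: le_trans (snormDB _ _) _; rewrite mulr2n mulrDl mul1r lerD2r snorm_iter.
Qed.

Lemma snorm_sub_iter j y : snorm (y - iter j tau y) <= j%:R * snorm (y - tau y).
Proof.
elim: j => [|j IH]; first by rewrite subrr snorm0 mul0r.
have -> : y - iter j.+1 tau y = (y - tau y) + tau (y - iter j tau y).
  by rewrite linearB /= addrA subrK.
apply: le_trans (snormD _ _) _; rewrite mulrSr mulrDl mul1r addrC lerD2r.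
exact: le_trans (snorm_tau _) IH.
Qed.

Lemma snorm_sub_cesaro k y : (0 < k)%N -> snorm (y - cesaro k y) <= k%:R * snorm (y - tau y).
Proof.
move=> k0; have kC : k%:R != 0 :> R[i] by rewrite pnatr_eq0 -lt0n.
have -> : y - cesaro k y = k%:R^-1 *: \sum_(j < k) (y - iter j tau y).
  by rewrite sumrB sumr_const card_ord scalerBr -[y *+ k]scaler_nat scalerA mulVf ?scale1r.
rewrite snormZ normc_invn ler_pdivrMl ?ltr0n //; apply: le_trans (snorm_sum _) _.
have -> : k%:R * (k%:R * snorm (y - tau y)) = \sum_(j < k) k%:R * snorm (y - tau y).
  by rewrite sumr_const card_ord mulr_natl.
apply: ler_sum => j _; apply: le_trans (snorm_sub_iter _ _) _.
by rewrite ler_wpM2r ?snorm_ge0 // ler_nat ltnW.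
Qed.

(* Smallest set containing y that is stable under tau and midpoints: this is all of
   the convex hull of the orbit that the minimisation argument uses. *)
Inductive orbit_hull (y : A) : A -> Prop :=
  | hull_base : orbit_hull y y
  | hull_tau v : orbit_hull y v -> orbit_hull y (tau v)
  | hull_mid v w : orbit_hull y v -> orbit_hull y w -> orbit_hull y (2^-1 *: (v + w)).

Lemma phi_hull y v : orbit_hull y v -> phi v = phi y.
Proof.
elim=> [//|{}v _ IH|v1 v2 _ IH1 _ IH2]; first by rewrite phi_tau.
by rewrite linearZ linearD /= IH1 IH2; field.
Qed.

Lemma cesaro_sub_hull_bounded y v : orbit_hull y v ->
  exists c : R, forall n, n%:R * snorm (cesaro n v - cesaro n y) <= c.
Proof.
elim=> [|{}v _ [c IH]|v1 v2 _ [c1 IH1] _ [c2 IH2]].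
- by exists 0 => n; rewrite subrr snorm0 mulr0.
- exists (c + 2 * snorm y) => n.
  have -> : cesaro n (tau v) - cesaro n y
      = tau (cesaro n v - cesaro n y) + (cesaro n (tau y) - cesaro n y).
    by rewrite !cesaro_tau linearB /= addrA subrK.
  apply: le_trans (ler_wpM2l (ler0n _ _) (snormD _ _)) _.
  rewrite mulrDr lerD ?cesaro_tau_sub //.
  exact: le_trans (ler_wpM2l (ler0n _ _) (snorm_tau _)) (IH n).
- exists (2^-1 * (c1 + c2)) => n.
  have -> : cesaro n (2^-1 *: (v1 + v2)) - cesaro n y
      = 2^-1 *: ((cesaro n v1 - cesaro n y) + (cesaro n v2 - cesaro n y)).
    rewrite linearZ linearD /= addrACA -opprD scalerBr -[cesaro n y + _]mulr2n.
    by rewrite -[cesaro n y *+ 2]scaler_nat scalerA mulVf ?scale1r ?pnatr_eq0.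
  rewrite snormZ normc_invn mulrCA ler_wpM2l ?invr_ge0 ?ler0n //.
  apply: le_trans (ler_wpM2l (ler0n _ _) (snormD _ _)) _.
  by rewrite mulrDr lerD.
Qed.

(* v j nearly minimises ||.||^2 on the hull; since midpoints stay in the hull,
   the parallelogram law controls v i - v j and tau (v j) - v j. *)
Lemma hull_minimizing y (eps : nat -> R) : (forall j, 0 < eps j) -> exists v : nat -> A,
  [/\ forall j, orbit_hull y (v j),
      forall i j, snorm (v i - v j) ^+ 2 <= 2 * eps i + 2 * eps j &
      forall j, snorm (tau (v j) - v j) ^+ 2 <= 4 * eps j].
Proof.
move=> eps_gt0; pose E := [set snorm v ^+ 2 | v in orbit_hull y]%classic.
have E_lb : has_lbound E by exists 0 => _ [v _ <-]; apply: sqr_ge0.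
have E_inf : has_inf E by split=> //; exists (snorm y ^+ 2), y => //; apply: hull_base.
have m_le v : orbit_hull y v -> inf E <= snorm v ^+ 2.
  by move=> hv; apply: ge_inf => //; exists v.
have /choice [v hv] j : exists v, orbit_hull y v /\ snorm v ^+ 2 < inf E + eps j.
  by have [_ [w hw <-] ?] := inf_adherent (eps_gt0 j) E_inf; exists w.
exists v; split=> [j|i j|j]; first by case: (hv j).
- have [hi vi] := hv i; have [hj vj] := hv j.
  have := snorm_sqrB_mid (m_le _ (hull_mid hi hj)); lra.
- have [hj vj] := hv j; have := snorm_tau_sqr (v j).
  have := snorm_sqrB_mid (m_le _ (hull_mid (hull_tau hj) hj)); lra.
Qed.

Lemma ergodic_hull_approx y (e : R) : ergodic star phi tau -> 0 < e ->
  exists v, orbit_hull y v /\ snorm (v - (phi y)%:A) < e.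
Proof.
move=> erg e0.
have [eps eps_gt0 small_eps] : exists2 eps : nat -> R, (forall j, 0 < eps j) &
    forall r, 0 < r -> exists N, forall n, (N <= n)%N -> 4 * eps n < r ^+ 2.
  exists (fun j => j.+1%:R^-1) => [j|r r0]; first by rewrite invr_gt0.
  have [N hN] := invSn_lt_eventually (divr_gt0 (exprn_gt0 2 r0) (ltr0n R 4)).
  by exists N => n /hN; rewrite ltr_pdivlMr ?ltr0n // mulrC.
have [v [v_hull v_cauchy v_inv]] := hull_minimizing y eps_gt0.
have [alpha /cvgC_phinorm v_alpha] :
    exists alpha, cvgC (fun n => phinorm star phi (v n - alpha%:A)) 0.
  apply: erg.
    apply/cvgC_phinorm => r r0; have [N hN] := small_eps r r0.
    by exists N => n /hN h; apply: (snorm_lt_sqr r0 (le_lt_trans (v_inv n) h)).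
  apply/phi_cauchyP => r r0; have [N hN] := small_eps r r0.
  exists N => m n /ltnW/hN Nm /ltnW/hN Nn; apply/ltW/(snorm_lt_sqr r0).
  by apply: le_lt_trans (v_cauchy m n) _; lra.
have [N hN] := v_alpha _ (divr_gt0 e0 (ltr0n R 2)).
exists (v N); split=> //; have vN := hN N (leqnn N).
have -> : v N - (phi y)%:A = (v N - alpha%:A) + (alpha - phi y)%:A.
  by rewrite scalerBl addrA subrK.
apply: le_lt_trans (snormD _ _) _; rewrite snorm_alg -normcN opprB.
have : normc (phi y - alpha) <= snorm (v N - alpha%:A).
  by rewrite -(phi_hull (v_hull N)) -[alpha in _ - alpha]phi_alg -linearB normc_phi_le.
lra.
Qed.

Theorem mean_ergodic y : ergodic star phi tau ->
  cvgC (fun n => phinorm star phi (cesaro n y - (phi y)%:A)) 0.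
Proof.
move=> erg; apply/cvgC_phinorm => e e0; have e2 : 0 < e / 2 by rewrite divr_gt0.
have [v [v_hull v_close]] := ergodic_hull_approx y erg e2.
have [c hc] := cesaro_sub_hull_bounded v_hull.
have c0 : 0 <= c by have := hc 0%N; rewrite mul0r.
have [N hN] := invSn_lt_eventually (divr_gt0 e2 (ltr_wpDl c0 ltr01)).
exists N.+1 => -[//|n] /hN n_large.
have -> : cesaro n.+1 y - (phi y)%:A
    = (cesaro n.+1 y - cesaro n.+1 v) + cesaro n.+1 (v - (phi y)%:A).
  by rewrite linearB /= cesaro_alg // addrA subrK.
apply: le_lt_trans (snormD _ _) _.
have := le_lt_trans (snorm_cesaro n.+1 _) v_close.
rewrite ltr_pdivlMr ?ltr_wpDl // in n_large.
have inv0 : 0 <= n.+1%:R^-1 :> R by rewrite invr_ge0.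
have := ler_wpM2l inv0 (hc n.+1); rewrite mulrA mulVf ?pnatr_eq0 // mul1r snormB.
move: inv0 n_large; move: (n.+1%:R^-1 : R) => d; nra.
Qed.

Lemma cesaro_corr_cvg x y : ergodic star phi tau ->
  cvgC (cesaro_corr phi tau x y) (phi x * phi y).
Proof.
move=> /(mean_ergodic y)/cvgC_phinorm cvg_y; apply/cvgCP => e e0.
have sx : 0 < snorm (star x) + 1 by rewrite ltr_wpDl ?snorm_ge0.
have [N hN] := cvg_y _ (divr_gt0 e0 sx); exists N => n /hN small.
have -> : cesaro_corr phi tau x y n - phi x * phi y
    = inner (star x) (cesaro n y - (phi y)%:A).
  symmetry; rewrite /inner starK mulrBr linearB /= mulr_algr linearZ /=.
  by rewrite cesaro_corrE mulrC.
apply: le_lt_trans (normc_inner_le _ _) _; rewrite ltr_pdivlMr // in small.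
have := snorm_ge0 (star x); have := snorm_ge0 (cesaro n y - (phi y)%:A); nra.
Qed.

Lemma snorm_sqr_le_cesaro b k :
  snorm b ^+ 2 <= Re (inner b (cesaro k b)) + snorm b * snorm (b - cesaro k b).
Proof.
have -> : snorm b ^+ 2 = Re (inner b (cesaro k b)) + Re (inner b (b - cesaro k b)).
  by rewrite -raddfD /= -linearD /= addrC subrK inner_self.
by rewrite lerD2l Re_inner_le.
Qed.

Lemma snorm_sub_cesaro_le x y k : (0 < k)%N ->
  snorm (x - cesaro k x) <= 2 * snorm (x - y) + k%:R * snorm (y - tau y).
Proof.
move=> k0; have -> : x - cesaro k x = (x - y) + (y - cesaro k y) + cesaro k (y - x).
  by rewrite linearB /= !addrA !subrK.
apply: le_trans (snormD _ _) _.
have := snormD (x - y) (y - cesaro k y); have := snorm_sub_cesaro y k0.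
have := snorm_cesaro k (y - x); rewrite snormB; lra.
Qed.

Section TotalSets.
Variables S T : A -> Prop.
Hypotheses (S_total : phi_total star phi S) (T_total : phi_total star phi T).
Hypothesis cesaro_ST : forall s t, S s -> T t ->
  cvgC (cesaro_corr phi tau (star s) t) (phi (star s) * phi t).

Lemma inner_cesaro_cvg_span n1 (c : 'I_n1 -> R[i]) s n2 (d : 'I_n2 -> R[i]) t :
  (forall i, S (s i)) -> (forall j, T (t j)) ->
  let g := \sum_(i < n1) c i *: s i in let f := \sum_(j < n2) d j *: t j in
  cvgC (fun n => inner g (cesaro n f)) (inner g 1 * phi f).
Proof.
move=> Ss Tt g f.
have -> : inner g 1 * phi f = \sum_i (c i)^* * \sum_j d j * (inner (s i) 1 * phi (t j)).
  rewrite inner_suml mulr_suml; apply: eq_bigr => i _.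
  rewrite innerZl linear_sum -mulrA mulr_sumr; congr (_ * _).
  by apply: eq_bigr => j _; rewrite linearZ /= mulrCA.
apply: (@eq_cvgC _ (fun n => \sum_i (c i)^* * \sum_j d j * inner (s i) (cesaro n (t j)))).
  move=> n; rewrite inner_suml; apply: eq_bigr => i _.
  rewrite innerZl !linear_sum; congr (_ * _); apply: eq_bigr => j _.
  by rewrite /= [cesaro n (_ *: _)]linearZ /= [RHS]linearZ.
apply: cvgC_sum => i; apply: cvgCMl; apply: cvgC_sum => j; apply: cvgCMl.
have -> : inner (s i) 1 = phi (star (s i)) by rewrite /inner mulr1.
by apply: eq_cvgC (cesaro_ST (Ss i) (Tt j)) => n; rewrite cesaro_corrE.
Qed.

Lemma inner_cesaro_cvg g f : cvgC (fun n => inner g (cesaro n f)) (inner g 1 * phi f).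
Proof.
apply: cvgC_approx => d d0.
have [K K_def] : {K | K = snorm g + snorm f + 1} by exists (snorm g + snorm f + 1).
have K0 : 0 < K by rewrite K_def ltr_wpDl ?addr_ge0 ?snorm_ge0.
pose eta := d / (d + K).
have eta0 : 0 < eta by apply: divr_gt0 => //; apply: addr_gt0.
have eta_K : eta * K <= d.
  by rewrite /eta mulrAC ler_pdivrMr ?addr_gt0 //; nra.
have eta1 : eta <= 1 by rewrite /eta ler_pdivrMr ?addr_gt0 // mul1r lerDl ltW.
have [n1 [c [s [Ss g_close]]]] := S_total g eta0.
have [n2 [dd [t [Tt f_close]]]] := T_total f eta0.
rewrite phinormE ltcR in g_close; rewrite phinormE ltcR in f_close.
exists (fun n => inner (\sum_i c i *: s i) (cesaro n (\sum_j dd j *: t j))).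
exists (inner (\sum_i c i *: s i) 1 * phi (\sum_j dd j *: t j)).
set g' := \sum_i c i *: s i in g_close *; set f' := \sum_j dd j *: t j in f_close *.
have g'_le : snorm g' <= snorm g + eta.
  have -> : g' = g - (g - g') by rewrite opprB addrC subrK.
  by apply: le_trans (snormDB _ _) _; rewrite lerD2l ltW.
have bound u u' : snorm u <= snorm f -> snorm (u - u') <= snorm (f - f') ->
    normc (inner g u - inner g' u') <= d.
  move=> uf uu'; apply: le_trans (normc_inner_sub _ _ _ _) _.
  have := snorm_ge0 u; have := snorm_ge0 (u - u'); have := snorm_ge0 g'.
  have := snorm_ge0 (g - g'); have := snorm_ge0 f; have := snorm_ge0 g; nra.
split; first exact: inner_cesaro_cvg_span.
  by move=> n; apply: bound; rewrite ?snorm_cesaro // -linearB snorm_cesaro.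
have inner_alg h k : inner h 1 * phi k = inner h (phi k)%:A by rewrite linearZ /= mulrC.
rewrite !inner_alg; apply: bound; first by rewrite snorm_alg normc_phi_le.
by rewrite -scalerBl -linearB snorm_alg normc_phi_le.
Qed.

Theorem ergodic_of_cesaro_total : ergodic star phi tau.
Proof.
move=> a /cvgC_phinorm a_inv /phi_cauchyP a_cauchy.
have [alpha /cvgCP phi_a] : exists alpha, cvgC (fun n => phi (a n)) alpha.
  apply: cauchy_cvgC => e /a_cauchy [N hN]; exists N.+1 => m n Nm Nn.
  by rewrite -linearB; apply: le_trans (normc_phi_le _) (hN _ _ Nm Nn).
exists alpha; apply/cvgC_phinorm => e e0; pose del := e / 4.
have del0 : 0 < del by rewrite divr_gt0.
have [N1 hN1] := phi_a _ del0; have [N2 hN2] := a_cauchy _ del0.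
exists (maxn N1 N2).+1 => m; rewrite gtn_max => /andP[/ltnW/hN1 m1 m2].
pose b := a m - alpha%:A.
have phi_b : normc (phi b) ^+ 2 <= del ^+ 2.
  rewrite ler_sqr ?nnegrE ?normc_ge0 ?(ltW del0) //.
  by rewrite linearB /= phi_alg ltW.
have [k k_gt0 close_k] : exists2 k, (0 < k)%N &
    normc (inner b (cesaro k b) - inner b 1 * phi b) < del ^+ 2.
  have [K hK] := (cvgCP _ _).1 (inner_cesaro_cvg b b) _ (exprn_gt0 2 del0).
  by exists K.+1 => //; apply: hK.
have k0 : 0 < k%:R :> R by rewrite ltr0n.
have [N3 hN3] := a_inv _ (divr_gt0 del0 k0).
pose n := maxn N3 N2.+1; pose b' := a n - alpha%:A.
have Re_bk : Re (inner b (cesaro k b)) <= del ^+ 2 + del ^+ 2.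
  have := Re_le_normc_subr (inner b (cesaro k b)) (normc (phi b) ^+ 2).
  by rewrite -inner1_phi; lra.
have near_b : snorm (b - cesaro k b) <= 3 * del.
  apply: le_trans (snorm_sub_cesaro_le b b' k_gt0) _.
  have -> : b - b' = a m - a n by rewrite opprB addrA subrK.
  have -> : b' - tau b' = a n - tau (a n).
    by rewrite linearB /= linearZ /= tau1 opprB addrA subrK.
  have := hN2 m n m2 (leq_maxr N3 N2.+1).
  have := hN3 n (leq_maxl N3 N2.+1); rewrite snormB ltr_pdivlMr //; lra.
have e_del : e = 4 * del by rewrite /del mulrC divfK ?pnatr_eq0.
have := snorm_sqr_le_cesaro b k; have := ler_wpM2l (snorm_ge0 b) near_b.
rewrite e_del; clearbody del; have := snorm_ge0 b; nra.
Qed.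
End TotalSets.
End Dynamics.
End StarSeminorm.

Theorem proposition4p6 (R : realType) (A : algType R[i]) (star : A -> A)
    (phi : A -> R[i]) (tau : A -> A) (S T : A -> Prop) :
  is_star_dyn_system star phi tau ->
  phi_total star phi S -> phi_total star phi T ->
  (ergodic star phi tau ->
     forall x y : A, cvgC (cesaro_corr phi tau x y) (phi x * phi y)) /\
  ((forall x0 y : A, S x0 -> T y ->
      cvgC (cesaro_corr phi tau (star x0) y) (phi (star x0) * phi y)) ->
   ergodic star phi tau).
Proof.
case=> star_inv phi_state tau_lin tau1 tau_contr S_total T_total; split.
  by move=> erg x y; apply: (cesaro_corr_cvg star_inv phi_state tau_lin tau1 tau_contr).
move=> cesaro_ST.
exact: (ergodic_of_cesaro_total star_inv phi_state tau_lin tau1 tau_contr S_total T_total).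
Qed.
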